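(* Let $X_1,X_2$ be locally compact Hausdorff spaces, $\mathcal{A}_i\subset\mathcal{C}_c(X_i)$ subalgebras, and $M_i,N_i$ uniform norms on $\mathcal{A}_i$ ($i=1,2$). If $M_1\preceq N_1$ and $M_2\preceq N_2$, then $M_1\otimes M_2\preceq N_1\otimes N_2$ on $\mathcal{A}_1\otimes\mathcal{A}_2$.
   Context: A norm $M$ on $\mathcal{A}\subset\mathcal{C}_c(X)$ is uniform if $\|\phi\|_\infty\le F\,M(\phi)$ for some constant $F$ and all $\phi$. For uniform norms on a subalgebra, $M\preceq N$ means there exist $D_1,D_2>0$ with $M(\phi_1)\le D_1N(\phi_1)$ and $M(\phi_1\phi_2)\le D_2N(\phi_1)N(\phi_2)$ for all $\phi_1,\phi_2$. $\mathcal{A}_1\otimes\mathcal{A}_2$ is the subalgebra of $\mathcal{C}_c(X_1\times X_2)$ of finite sums $\sum_i\phi_{1i}\otimes\phi_{2i}$, and $(M_1\otimes M_2)(\phi)=\inf\sum_iM_1(\phi_{1i})M_2(\phi_{2i})$ over all such representations of $\phi$ (projective tensor norm). *)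

From mathcomp Require Import all_boot all_order all_algebra.
From mathcomp Require Import all_classical all_reals all_analysis.
From mathcomp Require Import complex.
Import numFieldNormedType.Exports.
Set Implicit Arguments. Unset Strict Implicit. Unset Printing Implicit Defensive.
Import Order.TTheory GRing.Theory Num.Theory.
Local Open Scope classical_set_scope.
Local Open Scope ring_scope.

Definition C (R : rcfType) : numFieldType := R[i].

Definition cmod (R : rcfType) (z : C R) : R := ComplexField.Normc.normc (z : R[i]).

Definition support (R : realType) (X : topologicalType) (f : X -> C R) : set X :=
  closure [set x | f x != 0].

Definition Cc (R : realType) (X : topologicalType) : set (X -> C R) :=
  [set f | continuous f /\ compact (support f)].

Definition subalgebra_Cc (R : realType) (X : topologicalType)
    (A : set (X -> C R)) : Prop :=
  [/\ A `<=` @Cc R X,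
      A (fun _ => 0),
      (forall f g, A f -> A g -> A (fun x => f x + g x)),
      (forall (c : C R) f, A f -> A (fun x => c * f x)) &
      (forall f g, A f -> A g -> A (fun x => f x * g x))].

Definition is_norm_on (R : realType) (X : topologicalType)
    (A : set (X -> C R)) (M : (X -> C R) -> R) : Prop :=
  [/\ (forall f, A f -> 0 <= M f),
      (forall f, A f -> M f = 0 -> f = (fun _ => 0)),
      (forall f g, A f -> A g -> M (fun x => f x + g x) <= M f + M g) &
      (forall (c : C R) f, A f -> M (fun x => c * f x) = cmod c * M f)].

Definition uniform_norm (R : realType) (X : topologicalType)
    (A : set (X -> C R)) (M : (X -> C R) -> R) : Prop :=
  is_norm_on A M /\
  exists F : R, forall f, A f -> forall x, cmod (f x) <= F * M f.

Definition norm_preceq (R : realType) (X : topologicalType)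
    (A : set (X -> C R)) (M N : (X -> C R) -> R) : Prop :=
  exists D1 D2 : R, [/\ 0 < D1, 0 < D2,
    (forall f, A f -> M f <= D1 * N f) &
    (forall f g, A f -> A g -> M (fun x => f x * g x) <= D2 * N f * N g)].

Definition tensor_rep (R : realType) (X1 X2 : topologicalType)
    (A1 : set (X1 -> C R)) (A2 : set (X2 -> C R))
    (s : seq ((X1 -> C R) * (X2 -> C R))) (phi : X1 * X2 -> C R) : Prop :=
  (forall p, p \in s -> A1 p.1 /\ A2 p.2) /\
  phi = (fun z => \sum_(p <- s) p.1 z.1 * p.2 z.2).

Definition tensor_alg (R : realType) (X1 X2 : topologicalType)
    (A1 : set (X1 -> C R)) (A2 : set (X2 -> C R)) : set (X1 * X2 -> C R) :=
  [set phi | exists s, tensor_rep A1 A2 s phi].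

Definition proj_tensor_norm (R : realType) (X1 X2 : topologicalType)
    (A1 : set (X1 -> C R)) (A2 : set (X2 -> C R))
    (M1 : (X1 -> C R) -> R) (M2 : (X2 -> C R) -> R) (phi : X1 * X2 -> C R) : R :=
  inf [set r : R | exists s, tensor_rep A1 A2 s phi /\
                     r = \sum_(p <- s) M1 p.1 * M2 p.2].

From mathcomp Require Import all_boot all_order all_algebra.
From mathcomp Require Import all_classical all_reals all_analysis.
From mathcomp Require Import complex.
From mathcomp Require Import ring.
Import numFieldNormedType.Exports.
Set Implicit Arguments. Unset Strict Implicit. Unset Printing Implicit Defensive.
Import Order.TTheory GRing.Theory Num.Theory.
Local Open Scope classical_set_scope.
Local Open Scope ring_scope.

(* The projective tensor norm is an infimum of costs sum_i M1(f_i) M2(g_i)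
   of representations, so both bounds are proved representation-wise and
   then passed to the infimum.  For a single representation the linear bound
   is termwise; for a product, the pairwise products f_i f'_j, g_i g'_j of two
   representations represent phi psi, and the cost factors as a double sum. *)

Lemma ler_pM_inf (R : realType) (S : set R) (y c : R) :
  S !=set0 -> (forall a, S a -> 0 <= a) -> 0 <= c ->
  (forall a, S a -> y <= c * a) -> y <= c * inf S.
Proof.
move=> [a0 Sa0] S_ge0 c_ge0 le_yS.
have [c0|c_neq0] := eqVneq c 0.
  by have := le_yS a0 Sa0; rewrite c0 !mul0r.
have c_gt0 : 0 < c by rewrite lt_neqAle eq_sym c_neq0.
rewrite -ler_pdivrMl //; apply: lb_le_inf; first by exists a0.
by move=> a Sa; rewrite ler_pdivrMl //; apply: le_yS.
Qed.

Section ProjectiveTensorNorm.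
Variables (R : realType) (X1 X2 : topologicalType).
Variables (A1 : set (X1 -> C R)) (A2 : set (X2 -> C R)).

Definition tensor_rep_cost (M1 : (X1 -> C R) -> R) (M2 : (X2 -> C R) -> R)
    (s : seq ((X1 -> C R) * (X2 -> C R))) : R :=
  \sum_(p <- s) M1 p.1 * M2 p.2.

Definition tensor_rep_mul (s t : seq ((X1 -> C R) * (X2 -> C R))) :
    seq ((X1 -> C R) * (X2 -> C R)) :=
  [seq ((fun x => p.1 x * q.1 x), (fun y => p.2 y * q.2 y)) | p <- s, q <- t].

Lemma tensor_rep_mulP s t phi psi :
  (forall f g, A1 f -> A1 g -> A1 (fun x => f x * g x)) ->
  (forall f g, A2 f -> A2 g -> A2 (fun y => f y * g y)) ->
  tensor_rep A1 A2 s phi -> tensor_rep A1 A2 t psi ->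
  tensor_rep A1 A2 (tensor_rep_mul s t) (fun z => phi z * psi z).
Proof.
move=> mulA1 mulA2 [As ->] [At ->]; split.
  move=> _ /allpairsP [[p q] [/= ps qt ->]] /=.
  by case: (As p ps) => A1p A2p; case: (At q qt) => A1q A2q; split; auto.
apply: funext => z; rewrite big_allpairs_dep /= big_distrlr /=.
by apply: eq_bigr => p _; apply: eq_bigr => q _; ring.
Qed.

Section Cost.
Variables (M1 : (X1 -> C R) -> R) (M2 : (X2 -> C R) -> R).
Hypotheses (M1_ge0 : forall f, A1 f -> 0 <= M1 f)
           (M2_ge0 : forall g, A2 g -> 0 <= M2 g).

Lemma tensor_rep_cost_ge0 s phi :
  tensor_rep A1 A2 s phi -> 0 <= tensor_rep_cost M1 M2 s.
Proof.
move=> [As _]; rewrite /tensor_rep_cost big_seq.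
by apply: sumr_ge0 => p /As [A1p A2p]; apply: mulr_ge0; auto.
Qed.

Lemma proj_tensor_norm_le_cost s phi : tensor_rep A1 A2 s phi ->
  proj_tensor_norm A1 A2 M1 M2 phi <= tensor_rep_cost M1 M2 s.
Proof.
move=> rep_s; apply: ge_inf; last by exists s.
by exists 0 => r [t [rep_t ->]]; apply: tensor_rep_cost_ge0 rep_t.
Qed.

Lemma proj_tensor_norm_ge phi (y c : R) : tensor_alg A1 A2 phi -> 0 <= c ->
  (forall s, tensor_rep A1 A2 s phi -> y <= c * tensor_rep_cost M1 M2 s) ->
  y <= c * proj_tensor_norm A1 A2 M1 M2 phi.
Proof.
move=> [s rep_s] c_ge0 le_y; apply: ler_pM_inf => //.
- by exists (tensor_rep_cost M1 M2 s), s.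
- by move=> r [t [rep_t ->]]; apply: tensor_rep_cost_ge0 rep_t.
- by move=> r [t [rep_t ->]]; apply: le_y.
Qed.

Lemma proj_tensor_norm_ge0 phi :
  tensor_alg A1 A2 phi -> 0 <= proj_tensor_norm A1 A2 M1 M2 phi.
Proof.
move=> A_phi; rewrite -[proj_tensor_norm _ _ _ _ _]mul1r.
by apply: proj_tensor_norm_ge => // s rep_s; rewrite mul1r;
  apply: tensor_rep_cost_ge0 rep_s.
Qed.

End Cost.

Section Comparison.
Variables (M1 N1 : (X1 -> C R) -> R) (M2 N2 : (X2 -> C R) -> R).
Hypotheses (M1_ge0 : forall f, A1 f -> 0 <= M1 f)
           (M2_ge0 : forall g, A2 g -> 0 <= M2 g)
           (N1_ge0 : forall f, A1 f -> 0 <= N1 f)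
           (N2_ge0 : forall g, A2 g -> 0 <= N2 g).

Lemma proj_tensor_norm_le_scale (D1 E1 : R) :
  0 <= D1 * E1 ->
  (forall f, A1 f -> M1 f <= D1 * N1 f) ->
  (forall g, A2 g -> M2 g <= E1 * N2 g) ->
  forall phi, tensor_alg A1 A2 phi ->
  proj_tensor_norm A1 A2 M1 M2 phi <= D1 * E1 * proj_tensor_norm A1 A2 N1 N2 phi.
Proof.
move=> DE_ge0 le_M1 le_M2 phi A_phi.
apply: proj_tensor_norm_ge => // s rep_s.
apply: le_trans (proj_tensor_norm_le_cost M1_ge0 M2_ge0 rep_s) _.
move: rep_s => [As _]; rewrite /tensor_rep_cost big_distrr /= !big_seq.
apply: ler_sum => p /As [A1p A2p]; rewrite mulrACA.
by apply: ler_pM; auto.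
Qed.

Hypotheses
  (mulA1 : forall f g, A1 f -> A1 g -> A1 (fun x => f x * g x))
  (mulA2 : forall f g, A2 f -> A2 g -> A2 (fun y => f y * g y)).

Lemma tensor_rep_cost_mul_le (D2 E2 : R) s t phi psi :
  (forall f g, A1 f -> A1 g -> M1 (fun x => f x * g x) <= D2 * N1 f * N1 g) ->
  (forall f g, A2 f -> A2 g -> M2 (fun y => f y * g y) <= E2 * N2 f * N2 g) ->
  tensor_rep A1 A2 s phi -> tensor_rep A1 A2 t psi ->
  tensor_rep_cost M1 M2 (tensor_rep_mul s t) <=
  D2 * E2 * tensor_rep_cost N1 N2 s * tensor_rep_cost N1 N2 t.
Proof.
move=> le_M1 le_M2 [As _] [At _].
rewrite /tensor_rep_cost big_allpairs_dep /= -mulrA big_distrlr big_distrr /=.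
rewrite !big_seq; apply: ler_sum => p /As [A1p A2p].
rewrite big_distrr /= !big_seq; apply: ler_sum => q /At [A1q A2q] /=.
have -> : D2 * E2 * (N1 p.1 * N2 p.2 * (N1 q.1 * N2 q.2)) =
          (D2 * N1 p.1 * N1 q.1) * (E2 * N2 p.2 * N2 q.2) by ring.
by apply: ler_pM; auto.
Qed.

Lemma proj_tensor_norm_mul_le (D2 E2 : R) :
  0 <= D2 * E2 ->
  (forall f g, A1 f -> A1 g -> M1 (fun x => f x * g x) <= D2 * N1 f * N1 g) ->
  (forall f g, A2 f -> A2 g -> M2 (fun y => f y * g y) <= E2 * N2 f * N2 g) ->
  forall phi psi, tensor_alg A1 A2 phi -> tensor_alg A1 A2 psi ->
  proj_tensor_norm A1 A2 M1 M2 (fun z => phi z * psi z) <=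
  D2 * E2 * proj_tensor_norm A1 A2 N1 N2 phi * proj_tensor_norm A1 A2 N1 N2 psi.
Proof.
move=> DE_ge0 le_M1 le_M2 phi psi A_phi A_psi.
apply: proj_tensor_norm_ge => //.
  by apply: mulr_ge0 => //; apply: proj_tensor_norm_ge0.
move=> t rep_t; rewrite mulrAC; apply: proj_tensor_norm_ge => //.
  by apply: mulr_ge0 => //; apply: tensor_rep_cost_ge0 rep_t.
move=> s rep_s; rewrite mulrAC.
apply: le_trans (proj_tensor_norm_le_cost M1_ge0 M2_ge0
  (tensor_rep_mulP mulA1 mulA2 rep_s rep_t)) _.
exact: tensor_rep_cost_mul_le le_M1 le_M2 rep_s rep_t.
Qed.

End Comparison.

End ProjectiveTensorNorm.

Theorem lemma6p2 (R : realType) (X1 X2 : topologicalType)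
    (hX1 : hausdorff_space X1) (lcX1 : locally_compact [set: X1])
    (hX2 : hausdorff_space X2) (lcX2 : locally_compact [set: X2])
    (A1 : set (X1 -> C R)) (A2 : set (X2 -> C R))
    (hA1 : subalgebra_Cc A1) (hA2 : subalgebra_Cc A2)
    (M1 N1 : (X1 -> C R) -> R) (M2 N2 : (X2 -> C R) -> R)
    (uM1 : uniform_norm A1 M1) (uN1 : uniform_norm A1 N1)
    (uM2 : uniform_norm A2 M2) (uN2 : uniform_norm A2 N2)
    (h1 : norm_preceq A1 M1 N1) (h2 : norm_preceq A2 M2 N2) :
  norm_preceq (tensor_alg A1 A2)
    (proj_tensor_norm A1 A2 M1 M2) (proj_tensor_norm A1 A2 N1 N2).
Proof.
case: uM1 uM2 uN1 uN2 => [[M1_ge0 _ _ _] _] [[M2_ge0 _ _ _] _]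
  [[N1_ge0 _ _ _] _] [[N2_ge0 _ _ _] _].
case: hA1 hA2 => [_ _ _ _ mulA1] [_ _ _ _ mulA2].
case: h1 h2 => [D1 [D2 [D1_gt0 D2_gt0 le_M1 le_M1M1]]]
  [E1 [E2 [E1_gt0 E2_gt0 le_M2 le_M2M2]]].
have DE1_gt0 := mulr_gt0 D1_gt0 E1_gt0; have DE2_gt0 := mulr_gt0 D2_gt0 E2_gt0.
exists (D1 * E1), (D2 * E2); split => //.
- exact: proj_tensor_norm_le_scale (ltW DE1_gt0) le_M1 le_M2.
- exact: proj_tensor_norm_mul_le (ltW DE2_gt0) le_M1M1 le_M2M2.
Qed.
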